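(* Let $f\colon\mathbb{R}^n\to\overline{\mathbb{R}}$ be a lower semicontinuous function and $M\subset\mathbb{R}^n$ a closed set on which $f$ is finite. Fix a point $\bar x\in M$ and a vector $\bar v\in\hat\partial f(\bar x)$ (so that $(\bar x,f(\bar x),\bar v)\in[\hat\partial f]\big|_M$). Suppose there is a sequence of real numbers $m_i\to\infty$ such that for each $i$, $$\bar v\in\operatorname{bd}\bigcup_{x\in M}\partial\Big(f(\cdot)+\tfrac12 m_i|\cdot-\bar x|^2\Big)(x).$$ Then $(\bar x,f(\bar x),\bar v)\in\operatorname{cl}\,[\hat\partial f]\big|_{M^c}$; that is, there exist sequences $x_i\notin M$ and $v_i\in\hat\partial f(x_i)$ such that $(x_i,f(x_i),v_i)\to(\bar x,f(\bar x),\bar v)$.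
   Context: $\overline{\mathbb{R}}=\mathbb{R}\cup\{\pm\infty\}$. For $\bar x$ with $f(\bar x)$ finite, the Fréchet subdifferential $\hat\partial f(\bar x)$ is the set of $v\in\mathbb{R}^n$ with $f(x)\ge f(\bar x)+\langle v,x-\bar x\rangle+o(|x-\bar x|)$; the limiting subdifferential $\partial g(\bar x)$ of a function $g$ is the set of $v$ for which there exist $x_i$, $v_i\in\hat\partial g(x_i)$ with $(x_i,g(x_i),v_i)\to(\bar x,g(\bar x),v)$; both are empty where the function is not finite. The Fréchet subjet is $[\hat\partial f]=\{(x,y,v): y=f(x),\ v\in\hat\partial f(x)\}$, and for $S\subset\mathbb{R}^n$, $[\hat\partial f]\big|_S=[\hat\partial f]\cap(S\times\mathbb{R}\times\mathbb{R}^n)$. $\operatorname{bd}$ and $\operatorname{cl}$ denote boundary and closure, $M^c$ the complement of $M$, and $|\cdot|$ the Euclidean norm. *)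

From HB Require Import structures.
From mathcomp Require Import all_boot all_order all_algebra.
From mathcomp Require Import all_classical all_reals all_analysis.
Set Implicit Arguments. Unset Strict Implicit. Unset Printing Implicit Defensive.
Import Order.TTheory GRing.Theory Num.Theory.
Import numFieldNormedType.Exports.
Local Open Scope classical_set_scope.
Local Open Scope ring_scope.

Section Defs.
Variables (R : realType) (n : nat).
Notation V := 'rV[R]_n.

Definition dotv (u v : V) : R := \sum_(i < n) u 0 i * v 0 i.
Definition enorm (u : V) : R := Num.sqrt (dotv u u).

Definition frechet_subdiff (f : V -> \bar R) (xb : V) : set V :=
  [set v | f xb \is a fin_num /\
     forall eps : R, 0 < eps -> exists2 delta : R, 0 < delta &
       forall x : V, enorm (x - xb) < delta ->
         ((f xb + (dotv v (x - xb))%:E - (eps * enorm (x - xb))%:E) <= f x)%E].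

Definition limiting_subdiff (g : V -> \bar R) (xb : V) : set V :=
  [set v | g xb \is a fin_num /\
     exists (x : nat -> V) (w : nat -> V),
       (forall i, frechet_subdiff g (x i) (w i)) /\
       x @ \oo --> xb /\
       (fun i => fine (g (x i))) @ \oo --> fine (g xb) /\
       w @ \oo --> v].

Definition prox_shift (f : V -> \bar R) (m : R) (xb : V) : V -> \bar R :=
  fun y => (f y + (2^-1 * m * enorm (y - xb) ^+ 2)%:E)%E.

Definition bd (A : set V) : set V := closure A `\` interior A.

End Defs.

From HB Require Import structures.
From mathcomp Require Import all_boot all_order all_algebra.
From mathcomp Require Import all_classical all_reals all_analysis.
From mathcomp Require Import finmap lra.
Import Order.TTheory GRing.Theory Num.Theory.
Import numFieldNormedType.Exports.
Local Open Scope classical_set_scope.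
Local Open Scope ring_scope.

(* Fix t > 0 and i with m_i large. Since vb is a boundary point of the set A_i
   of limiting subgradients of the proximal shift f + m_i/2 |. - xb|^2 at points
   of M, some w close to vb lies outside A_i. Minimise the proximal shift tilted
   by -<w, . - xb> over a small closed ball around xb (lower semicontinuity and
   compactness). Comparing with the value at xb through the Frechet inequality of
   vb shows m_i |xs - xb| = O(t) at the minimiser xs, so xs is interior, close to
   xb, and f(xs) is close to f(xb). At an interior minimiser w is a Frechet, hence
   limiting, subgradient of the proximal shift, so xs lies outside M; subtracting
   the gradient m_i (xs - xb) of the quadratic gives a Frechet subgradient of f at
   xs close to vb. *)

Section Euclidean.
Context {R : realType} {n : nat}.
Notation V := 'rV[R]_n.
Implicit Types a b c : V.

Lemma dotvC a b : dotv a b = dotv b a.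
Proof. by apply: eq_bigr => i _; rewrite mulrC. Qed.

Lemma dotvDl a b c : dotv (a + b) c = dotv a c + dotv b c.
Proof. by rewrite /dotv -big_split; apply: eq_bigr => i _; rewrite mxE mulrDl. Qed.

Lemma dotvDr a b c : dotv a (b + c) = dotv a b + dotv a c.
Proof. by rewrite dotvC dotvDl !(dotvC a). Qed.

Lemma dotvZl (k : R) a b : dotv (k *: a) b = k * dotv a b.
Proof. by rewrite /dotv mulr_sumr; apply: eq_bigr => i _; rewrite mxE mulrA. Qed.

Lemma dotvNl a b : dotv (- a) b = - dotv a b.
Proof. by rewrite -scaleN1r dotvZl mulN1r. Qed.

Lemma dotvBl a b c : dotv (a - b) c = dotv a c - dotv b c.
Proof. by rewrite dotvDl dotvNl. Qed.

Lemma dotv0r a : dotv a 0 = 0.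
Proof. by rewrite dotvC -(scale0r 0) dotvZl mul0r. Qed.

Lemma dotvv_ge0 a : 0 <= dotv a a.
Proof. by apply: sumr_ge0 => i _; rewrite -expr2 sqr_ge0. Qed.

Lemma enorm_ge0 a : 0 <= enorm a.
Proof. exact: sqrtr_ge0. Qed.

Lemma enorm_sqr a : enorm a ^+ 2 = dotv a a.
Proof. by rewrite /enorm sqr_sqrtr // dotvv_ge0. Qed.

Lemma enorm0 : enorm (0 : V) = 0.
Proof. by rewrite /enorm dotv0r sqrtr0. Qed.

Lemma normr_coord_le a (i : 'I_n) : `|a 0 i| <= `|a|.
Proof.
have /mapP[j _ ->] : `|a 0 i| \in [seq `|a x.1 x.2| | x : 'I_1 * 'I_n].
  by apply/mapP; exists (0, i) => //=; rewrite mem_enum.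
by rewrite [leRHS](_ : _ = mx_norm a) // mx_normrE; apply/bigmax_geP; right; exists j.
Qed.

(* [`|a|] is the sup norm of the matrix [a], not the Euclidean norm [enorm a]. *)
Lemma normr_dotv_le a b : `|dotv a b| <= n%:R * `|a| * `|b|.
Proof.
apply: le_trans (ler_norm_sum _ _ _) _.
apply: le_trans (_ : \sum_(i < n) `|a| * `|b| <= _).
  by apply: ler_sum => i _; rewrite normrM ler_pM ?normr_coord_le.
by rewrite sumr_const card_ord -mulrA mulr_natl.
Qed.

Lemma normr_le_enorm a : `|a| <= enorm a.
Proof.
rewrite [leLHS](_ : _ = mx_norm a) // mx_normrE.
apply: bigmax_le => [|[i j] _ /=]; first exact: enorm_ge0.
rewrite (ord1 i) -sqrtr_sqr /enorm ler_wsqrtr // /dotv (bigD1 j) //= expr2 lerDl.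
by apply: sumr_ge0 => k _; rewrite -expr2 sqr_ge0.
Qed.

Lemma enorm_le_normr a : enorm a <= (n%:R + 1) * `|a|.
Proof.
have h0 : 0 <= (n%:R + 1) * `|a| by rewrite mulr_ge0 // addr_ge0.
rewrite -(ger0_norm h0) -sqrtr_sqr /enorm ler_wsqrtr //.
apply: le_trans (ler_norm _) _; apply: le_trans (normr_dotv_le _ _) _.
rewrite exprMn expr2 -mulrA ler_wpM2r ?mulr_ge0 //.
have : 0 <= n%:R :> R by [].
nra.
Qed.

Lemma continuous_dotv (T : topologicalType) (u v : T -> V) :
  continuous u -> continuous v -> continuous (fun t => dotv (u t) (v t)).
Proof.
move=> cu cv; apply: continuous_big => [|i _]; first exact: add_continuous.
have coord (w : T -> V) : continuous w -> continuous (fun t => w t 0 i).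
  by move=> cw t; exact: (continuous_comp (cw t) (@coord_continuous R 1 n 0 i (w t))).
by move=> t; apply: continuousM; apply: coord.
Qed.

End Euclidean.

Section Semicontinuity.
Context {T : topologicalType} {R : realType}.
Implicit Types g : T -> \bar R.

Lemma lower_semicontinuousDr g (h : T -> R) :
  lower_semicontinuous g -> continuous h ->
  lower_semicontinuous (fun y => (g y + (h y)%:E)%E).
Proof.
move=> lg ch x a ax.
have [d d0 gxd] : exists2 d : R, 0 < d & ((a - h x + d)%:E < g x)%E.
  move: ax; case: (g x) => [r||] //= ax; last by exists 1; rewrite ?ltry.
  by rewrite -EFinD lte_fin in ax; exists ((r + h x - a) / 2); rewrite ?lte_fin; lra.
have [U xU gU] := lg x _ gxd.
have hU : \forall y \near x, `|h x - h y| < d by move/cvgrPdist_lt : (ch x); apply.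
exists (U `&` [set y | `|h x - h y| < d]); first exact: filterI.
move=> y [/gU + /= hy]; case: (g y) => [r||] //=; last by rewrite addye ?ltry.
by rewrite -EFinD !lte_fin; have := ler_norm (h x - h y); lra.
Qed.

End Semicontinuity.

Lemma lower_semicontinuous_compact_min {T : ptopologicalType} {R : realType}
    (g : T -> \bar R) (B : set T) :
  compact B -> B !=set0 -> lower_semicontinuous g ->
  (forall y, B y -> g y != -oo%E) ->
  exists2 x, B x & forall y, B y -> (g x <= g y)%E.
Proof.
(* Without a minimum, the sets [g > a] for values a of g on B cover B; the least
   level of a finite subcover is a value of g at a point that is not covered. *)
move=> cB [x0 Bx0] lg gNy; apply: contrapT => nomin.
have lower y : B y -> exists2 z, B z & (g z < g y)%E.
  move=> By; apply: contrapT => ny; apply: nomin; exists y => // z Bz.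
  by rewrite leNgt; apply/negP => zy; apply: ny; exists z.
move: cB; rewrite (@compact_cover T) => /(_ R [set a | exists2 x, B x & (g x <= a%:E)%E]
  (fun a => [set y | (a%:E < g y)%E])) [].
- by move=> a _; move/lower_semicontinuousP : lg.
- move=> y By; have [z Bz zy] := lower y By.
  have gz : g z \is a fin_num.
    by rewrite fin_numE gNy //=; rewrite lt_eqF // (lt_le_trans zy) ?leey.
  by exists (fine (g z)); [exists z; rewrite ?fineK | rewrite /= fineK].
move=> D sD cov; have [a Da _] := cov x0 Bx0.
case: (arg_minP (fun c : D => val c) (isT : xpredT [` Da]%fset)) => -[b Db] _ bmin.
have [x Bx xb] : exists2 x, B x & (g x <= b%:E)%E by move: (sD b Db); rewrite in_setE.
have [c Dc /= cx] := cov x Bx.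
have := bmin [` Dc]%fset isT; rewrite /= -lee_fin => bc.
by have := lt_le_trans cx (le_trans xb bc); rewrite ltxx.
Qed.

Section Subdifferentials.
Context {R : realType} {n : nat}.
Notation V := 'rV[R]_n.
Implicit Types (f g : V -> \bar R) (x v w c : V).

Definition tilted g w c : V -> \bar R := fun y => (g y - (dotv w (y - c))%:E)%E.

Lemma closed_ball_compact c (r : R) : compact [set y : V | `|c - y| <= r].
Proof.
apply: bounded_closed_compact; last exact: closed_closed_ball_.
exists (`|c| + r); split; first by rewrite realD ?normr_real ?num_real.
move=> k rk y /= cy; apply: le_trans (ltW rk).
have := ler_normB c (c - y); rewrite opprB addrC subrK; lra.
Qed.

Lemma frechet_subdiff_limiting g x v :
  frechet_subdiff g x v -> limiting_subdiff g x v.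
Proof.
move=> gv; split; first by case: gv.
by exists (fun=> x), (fun=> v); do !split => //; exact: cvg_cst.
Qed.

Lemma tilted_lsc g w c : lower_semicontinuous g -> lower_semicontinuous (tilted g w c).
Proof.
move=> lg; apply: (@lower_semicontinuousDr _ _ g (fun y : V => - dotv w (y - c))) => //.
have cdot : continuous (fun y : V => dotv w (y - c)).
  apply: continuous_dotv; first exact: cst_continuous.
  by move=> z; apply: continuousB => //; exact: cst_continuous.
by move=> y; exact: (continuousN (cdot y)).
Qed.

Lemma prox_shift_lsc f (m : R) c :
  lower_semicontinuous f -> lower_semicontinuous (prox_shift f m c).
Proof.
move=> lf.
apply: (@lower_semicontinuousDr _ _ f (fun y : V => 2^-1 * m * enorm (y - c) ^+ 2)) => //.
have cBc : continuous (fun y : V => y - c).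
  by move=> z; apply: continuousB => //; exact: cst_continuous.
have -> : (fun y : V => 2^-1 * m * enorm (y - c) ^+ 2) =
          (fun y => 2^-1 * m * dotv (y - c) (y - c)).
  by apply: funext => y; rewrite enorm_sqr.
have cq : continuous (fun y : V => dotv (y - c) (y - c)) by exact: continuous_dotv.
by move=> y; exact: (continuousM (@cst_continuous _ _ (2^-1 * m) y) (cq y)).
Qed.

Lemma frechet_subdiff_tilted_min g w c x (r : R) : 0 < r -> g x \is a fin_num ->
  (forall y, enorm (y - x) < r -> (tilted g w c x <= tilted g w c y)%E) ->
  frechet_subdiff g x w.
Proof.
move=> r0 gx xmin; split => // eps eps0; exists r => // y /xmin; rewrite /tilted.
have -> : y - c = (y - x) + (x - c) by rewrite addrA subrK.
rewrite (dotvDr w (y - x)) -(fineK gx); have := enorm_ge0 (y - x).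
case: (g y) => [b||] //= e0; last by move=> _; rewrite leey.
rewrite -!EFinD !lee_fin; have := mulr_ge0 (ltW eps0) e0; lra.
Qed.

Lemma frechet_subdiff_prox_shift f (m : R) c x v :
  frechet_subdiff (prox_shift f m c) x v -> frechet_subdiff f x (v - m *: (x - c)).
Proof.
(* The quadratic differs from its linearisation at x by m/2 |y - x|^2 = o(|y - x|). *)
move=> [px hv]; have fx : f x \is a fin_num by move: px; rewrite /prox_shift; case: (f x).
split => // eps eps0.
have m1 : 0 < `|m| + 1 by rewrite ltr_pwDr.
have [delta d0 hd] := hv (eps / 2) (divr_gt0 eps0 (ltr0Sn _ 1)).
exists (Num.min delta (eps / (`|m| + 1))); first by rewrite lt_min d0 divr_gt0.
move=> y; rewrite lt_min => /andP[/hd + ye]; rewrite /prox_shift -(fineK fx).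
have -> : y - c = (y - x) + (x - c) by rewrite addrA subrK.
set u := y - x in ye *; set d := x - c; clearbody u d.
have key : m * dotv u u <= eps * enorm u.
  rewrite -enorm_sqr; rewrite ltr_pdivlMr // mulrC in ye.
  by have := ler_norm m; have := enorm_ge0 u; nra.
rewrite !enorm_sqr dotvBl dotvZl !dotvDl !dotvDr (dotvC u d).
case: (f y) => [b||] //=; last by move=> _; rewrite leey.
rewrite -!EFinD !lee_fin; have := enorm_ge0 u; lra.
Qed.

End Subdifferentials.

Lemma not_interior_near {R : realType} {V : normedModType R} {A : set V} {x : V} {e : R} :
  0 < e -> ~ interior A x -> exists2 w, `|w - x| < e & ~ A w.
Proof.
move=> e0 nAx; apply: contrapT => nw; apply: nAx; apply/nbhs_ballP; exists e => // y.
rewrite -ball_normE /= distrC => xy; apply: contrapT => Ny; apply: nw; by exists y.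
Qed.

Lemma cvg_dist_le_invS {R : realType} {V : normedModType R} (u : nat -> V) x :
  (forall k, `|x - u k| <= k.+1%:R^-1) -> u @ \oo --> x.
Proof.
move=> ux; apply/cvgrPdist_le => e e0; near=> k; apply: le_trans (ux k) (ltW _).
by near: k; exact: (near_infty_natSinv_lt (PosNum e0)).
Unshelve. all: by end_near. Qed.

Section Approximation.
Context {R : realType} {n : nat}.
Notation V := 'rV[R]_n.
Notation K := (n%:R : R).

Lemma tilted_min_estimate {a F m eps : R} {w vb d : V} :
  0 < m -> `|w - vb| <= eps ->
  a + 2^-1 * m * enorm d ^+ 2 - dotv w d <= F ->
  F + dotv vb d - eps * enorm d <= a ->
  m * enorm d <= 2 * (K + 1) * eps /\
  `|F - a| <= (K * (`|vb| + eps) + eps) * enorm d.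
Proof.
move=> m0 wvb up low; set e := enorm d in up low *.
have e0 : 0 <= e := enorm_ge0 d.
have K0 : 0 <= K by [].
have dotv_bound (u : V) (k : R) : `|u| <= k -> `|dotv u d| <= K * k * e.
  move=> uk; apply: le_trans (normr_dotv_le _ _) _.
  by rewrite -!mulrA ler_wpM2l // ler_pM // normr_le_enorm.
have hwv := dotv_bound _ _ wvb; rewrite dotvBl in hwv.
have hw : `|w| <= `|vb| + eps.
  by have := ler_normD vb (w - vb); rewrite addrC subrK; lra.
have hwd := dotv_bound _ _ hw; have hvd := dotv_bound _ _ (lexx `|vb|).
have eps0 : 0 <= eps := le_trans (normr_ge0 _) wvb.
have me2 : 0 <= m * e ^+ 2 by rewrite mulr_ge0 ?sqr_ge0 // ltW.
split.
  have : m * e ^+ 2 <= 2 * (K + 1) * eps * e.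
    by have := ler_norm (dotv w d - dotv vb d); lra.
  have [-> _|e_neq0] := eqVneq e 0; first by rewrite mulr0 !mulr_ge0 ?addr_ge0.
  by rewrite expr2 mulrA ler_pM2r // lt_def e_neq0.
have ee : 0 <= eps * e by rewrite mulr_ge0.
have Kee : 0 <= K * eps * e by rewrite !mulr_ge0.
have := ler_norm (dotv w d); have := ler_norm (- dotv vb d); rewrite normrN.
by rewrite ler_norml => *; apply/andP; split; lra.
Qed.

Lemma prox_shift_tilted_minimizer {f : V -> \bar R} {xb vb w : V} {m eps delta r : R} :
  lower_semicontinuous f -> f xb \is a fin_num ->
  (forall y, enorm (y - xb) < delta ->
    (f xb + (dotv vb (y - xb))%:E - (eps * enorm (y - xb))%:E <= f y)%E) ->
  0 < r -> (K + 1) * r < delta -> 0 < m -> 4 * (K + 1) * eps < m * r ->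
  `|w - vb| <= eps ->
  exists xs a, [/\ f xs = a%:E, frechet_subdiff (prox_shift f m xb) xs w,
    m * enorm (xs - xb) <= 2 * (K + 1) * eps &
    `|fine (f xb) - a| <= (K * (`|vb| + eps) + eps) * enorm (xs - xb)].
Proof.
(* The last-but-one hypothesis keeps the minimiser at distance < r/2 from xb,
   hence in the interior of B. *)
move=> lf fxb low r0 rdelta m0 mr wvb.
pose B := [set y : V | `|xb - y| <= r].
have Bxb : B xb by rewrite /B /= subrr normr0 ltW.
have Bdelta y : B y -> enorm (y - xb) < delta.
  rewrite /B /= distrC => yr; apply: le_lt_trans (enorm_le_normr _) _.
  by apply: le_lt_trans rdelta; rewrite ler_wpM2l ?addr_ge0.
pose g := tilted (prox_shift f m xb) w xb.
have gNy y : B y -> g y != -oo%E.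
  move=> /Bdelta /low; rewrite /g /tilted /prox_shift -(fineK fxb).
  by case: (f y).
have [xs Bxs xs_min] := lower_semicontinuous_compact_min g B (closed_ball_compact xb r)
  (ex_intro _ xb Bxb) (tilted_lsc _ w xb (prox_shift_lsc _ m xb lf)) gNy.
have gxb : g xb = f xb.
  by rewrite /g /tilted /prox_shift subrr enorm0 dotv0r expr0n /= mulr0 adde0 sube0.
have := low xs (Bdelta xs Bxs); have := xs_min xb Bxb.
rewrite gxb /g /tilted /prox_shift -(fineK fxb).
case fxs: (f xs) => [a||] //=; rewrite -!EFinD !lee_fin => xs_le xs_ge.
have [me Fa] := tilted_min_estimate m0 wvb xs_le xs_ge.
have xs_near : `|xb - xs| < r / 2.
  rewrite distrC; apply: le_lt_trans (normr_le_enorm _) _.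
  by rewrite -(ltr_pM2l m0); lra.
exists xs, a; split => //.
apply: (@frechet_subdiff_tilted_min _ _ _ _ _ _ (r / 2)); first by rewrite divr_gt0.
  by rewrite /prox_shift fxs.
move=> y yxs; apply: xs_min; rewrite /B /=.
apply: le_trans (ler_distD xs _ _) _.
by rewrite (distrC xs y); have := normr_le_enorm (y - xs); lra.
Qed.

Lemma frechet_subjet_outside_approx {f : V -> \bar R} {M : set V} {xb vb : V}
    {m : nat -> R} :
  lower_semicontinuous f -> frechet_subdiff f xb vb -> m @ \oo --> +oo ->
  (forall i, bd (\bigcup_(x in M) limiting_subdiff (prox_shift f (m i) xb) x) vb) ->
  forall t : R, 0 < t -> exists x v, [/\ ~ M x, frechet_subdiff f x v,
    `|xb - x| <= t, `|fine (f xb) - fine (f x)| <= t & `|vb - v| <= t].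
Proof.
move=> lf [fxb hvb] moo hbd t t0.
have K0 : 0 <= K by [].
pose eps := t / (4 * (K + 1)).
have eps0 : 0 < eps by rewrite divr_gt0 // mulr_gt0 // ltr_wpDl.
have epsE : 4 * (K + 1) * eps = t.
  by rewrite /eps mulrC divfK // gt_eqF // mulr_gt0 // ltr_wpDl.
have [delta delta0 hd] := hvb eps eps0.
(* The sup-norm ball of radius r lies in the Euclidean ball of radius delta. *)
pose r := delta / (K + 2).
have r0 : 0 < r by rewrite divr_gt0 // ltr_wpDl.
have rdelta : (K + 1) * r < delta.
  have rE : r * (K + 2) = delta by rewrite divfK // gt_eqF // ltr_wpDl.
  lra.
pose Q := K * (`|vb| + eps) + eps.
have Q0 : 0 <= Q by rewrite addr_ge0 ?mulr_ge0 ?addr_ge0 // ltW.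
have [i mi] : exists i, t / r + Q + 1 < m i.
  by have /cvgryPgt/(_ (t / r + Q + 1))[N _ hN] := moo; exists N; apply: hN => /=.
have tr0 : 0 < t / r by rewrite divr_gt0.
have mi0 : 0 < m i by lra.
have mir : 4 * (K + 1) * eps < m i * r by rewrite epsE -ltr_pdivrMr //; lra.
have [_ /(not_interior_near eps0)[w wvb wA]] := hbd i.
have [xs [a [fxs xsw me Fa]]] :=
  prox_shift_tilted_minimizer lf fxb hd r0 rdelta mi0 mir (ltW wvb).
move: me Fa; set e := enorm (xs - xb) => me Fa.
have e0 : 0 <= e := enorm_ge0 _.
have de : `|xs - xb| <= e := normr_le_enorm _.
have mie : m i * e <= t / 2 by lra.
have emie : e <= m i * e by rewrite ler_peMl //; lra.
have Qemie : Q * e <= m i * e by rewrite ler_wpM2r //; lra.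
exists xs, (w - m i *: (xs - xb)); split.
- by move=> Mxs; apply: wA; exists xs => //; exact: frechet_subdiff_limiting.
- exact: frechet_subdiff_prox_shift.
- by rewrite distrC (le_trans de) //; lra.
- by rewrite fxs /= (le_trans Fa) // -/Q; lra.
rewrite opprB addrCA addrC; apply: le_trans (ler_normD _ _) _.
rewrite normrZ ger0_norm ?ltW // distrC.
have : m i * `|xs - xb| <= m i * e by rewrite ler_wpM2l // ltW.
have : 0 <= K * eps by rewrite mulr_ge0 // ltW.
lra.
Qed.

End Approximation.

Theorem lemma3p2 (R : realType) (n : nat) (f : 'rV[R]_n -> \bar R)
  (M : set 'rV[R]_n) (xb vb : 'rV[R]_n) (m : nat -> R) :
  lower_semicontinuous f ->
  closed M ->
  (forall x, M x -> f x \is a fin_num) ->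
  M xb ->
  frechet_subdiff f xb vb ->
  m @ \oo --> +oo ->
  (forall i, bd (\bigcup_(x in M) limiting_subdiff (prox_shift f (m i) xb) x) vb) ->
  exists (x : nat -> 'rV[R]_n) (v : nat -> 'rV[R]_n),
    (forall i, ~ M (x i)) /\
    (forall i, frechet_subdiff f (x i) (v i)) /\
    x @ \oo --> xb /\
    (fun i => fine (f (x i))) @ \oo --> fine (f xb) /\
    v @ \oo --> vb.
Proof.
move=> lf _ _ _ fvb moo hbd.
have approx := frechet_subjet_outside_approx lf fvb moo hbd.
have /choice[p hp] : forall k : nat, exists p : 'rV[R]_n * 'rV[R]_n,
    [/\ ~ M p.1, frechet_subdiff f p.1 p.2, `|xb - p.1| <= k.+1%:R^-1,
     `|fine (f xb) - fine (f p.1)| <= k.+1%:R^-1 & `|vb - p.2| <= k.+1%:R^-1].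
  move=> k; have k0 : 0 < k.+1%:R^-1 :> R by rewrite invr_gt0.
  by have [x [v ?]] := approx _ k0; exists (x, v).
exists (fun k => (p k).1), (fun k => (p k).2).
split; first by move=> k; case: (hp k).
split; first by move=> k; case: (hp k).
split; first by apply: cvg_dist_le_invS => k; case: (hp k).
split; first by apply: cvg_dist_le_invS => k; case: (hp k).
by apply: cvg_dist_le_invS => k; case: (hp k).
Qed.
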